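(* Let $\overline{\Gamma'}$ be the undirected graph with vertex set $\Z[\tfrac12]$ in which two distinct vertices $f,g$ are adjacent iff $|f-g|=2^i$ for some $i\in\Z$. For $n\ge1$ let $e(n)$ be the number of unordered pairs $\{x,y\}\subset\{1,\dots,n\}$ with $|x-y|$ a power of $2$ (equivalently $e(n)=kn-2^k+1$ where $2^{k-1}<n\leq2^k$). Then every subgraph $G$ of $\overline{\Gamma'}$ with $n$ vertices satisfies $|E(G)|\leq e(n)$. *)

From mathcomp Require Import all_boot all_order all_algebra.
Set Implicit Arguments. Unset Strict Implicit. Unset Printing Implicit Defensive.
Import Order.TTheory GRing.Theory Num.Theory.
Local Open Scope ring_scope.

(* Z[1/2] as the dyadic rationals: denominator (in lowest terms) a power of 2. *)
Definition dyadic (q : rat) : Prop := exists k : nat, denq q = (2 ^ k)%N%:Z.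

Definition adj (f g : rat) : Prop :=
  f <> g /\ exists i : int, `|f - g| = (2%:Q) ^ i.

Definition is_pow2 (d : nat) : bool := [exists k : 'I_d.+1, d == (2 ^ k)%N].

(* e(n) = number of unordered pairs {x,y} of {1..n} (here encoded as {0..n-1},
   shift-invariant) with |x - y| a power of 2; pairs counted with x < y. *)
Definition e (n : nat) : nat :=
  #|[set p : 'I_n * 'I_n | (p.1 < p.2)%N & is_pow2 (p.2 - p.1)%N]|.

From mathcomp Require Import all_boot all_order all_algebra.
From mathcomp Require Import zify.
Import Order.TTheory GRing.Theory Num.Theory.

(* Scaling by a common power of 2 and translating maps the vertices to distinct
   naturals and every edge to a pair x < y with y - x a power of 2, so it suffices
   to count such pairs in a finite set W of naturals.  Split W into its odd part B
   and its even part A: halving is an isomorphism on each part, while an edge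
   between the parts has odd length, hence length 1.  Such unit steps form a path
   and give each vertex at most one successor and one predecessor, so there are at
   most min(|W| - 1, 2 min(|A|, |B|)) of them.  Induction on the largest element
   thus reduces the theorem to
     e(a) + e(b) + min(a + b - 1, 2 min(a, b)) <= e(a + b),
   which follows by strong induction from e(n) = e(floor(n/2)) + e(ceil(n/2)) + n - 1,
   the same splitting applied to {0, ..., n - 1}. *)

Set Implicit Arguments.
Unset Strict Implicit.
Unset Printing Implicit Defensive.

Section PairCounting.
Variable T : eqType.

Definition ncross (r : rel T) (A B : seq T) : nat := \sum_(x <- A) \sum_(y <- B) r x y.

Definition nedges (r : rel T) (s : seq T) : nat := ncross r s s.

Lemma nedges_cat r A B :
  nedges r (A ++ B) = nedges r A + nedges r B + (ncross r A B + ncross r B A).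
Proof.
rewrite /nedges /ncross big_cat /=.
under eq_bigr do rewrite big_cat /=.
under [X in _ + X]eq_bigr do rewrite big_cat /=.
rewrite !big_split /=; lia.
Qed.

Lemma nedges_perm r A B : perm_eq A B -> nedges r A = nedges r B.
Proof.
move=> eqAB; rewrite /nedges /ncross (perm_big _ eqAB) /=.
by apply: eq_bigr => x _; apply: perm_big.
Qed.

Lemma nedges_filterC r (a : pred T) s :
  nedges r s = nedges r (filter a s) + nedges r (filter (predC a) s)
               + (ncross r (filter a s) (filter (predC a) s)
                  + ncross r (filter (predC a) s) (filter a s)).
Proof. by rewrite -nedges_cat; apply/nedges_perm; rewrite perm_sym perm_filterC. Qed.

Lemma size_pairs_le_nedges r s (E : seq (T * T)) :
  uniq E -> (forall p, p \in E -> [&& p.1 \in s, p.2 \in s & r p.1 p.2]) ->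
  size E <= nedges r s.
Proof.
move=> uE Es.
have -> : nedges r s = count (fun p => r p.1 p.2) [seq (x, y) | x <- s, y <- s].
  rewrite /nedges /ncross -sum1_count [RHS]big_mkcond big_allpairs /=.
  by apply: eq_bigr => x _; apply: eq_bigr => y _; case: (r x y).
rewrite -size_filter; apply: uniq_leq_size => // -[x y] /Es /and3P [xs ys rxy].
by rewrite mem_filter rxy allpairs_f.
Qed.

End PairCounting.

Lemma nedges_map (T U : eqType) (f : T -> U) (r : rel T) (r' : rel U) s :
  {in s &, forall x y, r x y = r' (f x) (f y)} -> nedges r s = nedges r' (map f s).
Proof.
move=> rf; rewrite /nedges /ncross big_map; apply: eq_big_seq => x xs.
by rewrite big_map; apply: eq_big_seq => y ys; rewrite rf.
Qed.

Lemma is_pow2P d : reflect (exists k, d = 2 ^ k) (is_pow2 d).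
Proof.
apply: (iffP existsP) => [[k /eqP ->]|[k ->]]; first by exists k.
have k_lt : k < (2 ^ k).+1 by rewrite ltnS ltnW // ltn_expl.
by exists (Ordinal k_lt).
Qed.

Lemma is_pow2_double d : is_pow2 d.*2 = is_pow2 d.
Proof.
apply/is_pow2P/is_pow2P => [[[|k] dk]|[k ->]]; last by exists k.+1; rewrite expnS mul2n.
  by move: dk => /(congr1 odd); rewrite odd_double.
by exists k; move/eqP: dk; rewrite expnS -mul2n eqn_pmul2l // => /eqP.
Qed.

Lemma is_pow2_odd d : odd d -> is_pow2 d = (d == 1).
Proof.
move=> odd_d; apply/is_pow2P/eqP => [[[|k] dk]|->]; [by [] | | by exists 0].
by move: odd_d; rewrite dk expnS oddM.
Qed.

Definition pow2_rel : rel nat := fun x y => (x < y) && is_pow2 (y - x).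

Definition succ_rel : rel nat := fun x y => y == x.+1.

Lemma pow2_rel_half x y : odd x = odd y -> pow2_rel x y = pow2_rel x./2 y./2.
Proof.
move=> oddxy; rewrite -[in LHS](odd_double_half x) -[in LHS](odd_double_half y) oddxy.
by rewrite /pow2_rel ltn_add2l ltn_double subnDl -doubleB is_pow2_double.
Qed.

Lemma succ_rel_parity x y : odd x = odd y -> succ_rel x y = false.
Proof. by move=> oddxy; apply/eqP => yx; move: oddxy; rewrite yx /=; case: (odd x). Qed.

Lemma pow2_rel_parity x y : odd x != odd y -> pow2_rel x y = succ_rel x y.
Proof.
rewrite /pow2_rel /succ_rel => oddxy; case: (ltnP x y) => [xy|yx].
  rewrite andTb is_pow2_odd; first by rewrite -(eqn_add2r x) (subnK (ltnW xy)) add1n.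
  by rewrite (oddB (ltnW xy)) addbC; case: (odd x) (odd y) oddxy => [] [].
by apply/esym/eqP => yx'; move: yx; rewrite yx' ltnn.
Qed.

Lemma filter_odd_same_parity W : {in filter odd W &, forall x y, odd x = odd y}.
Proof. by move=> x y; rewrite !mem_filter => /andP[-> _] /andP[-> _]. Qed.

Lemma filter_even_same_parity W :
  {in filter (predC odd) W &, forall x y, odd x = odd y}.
Proof. by move=> x y; rewrite !mem_filter => /andP[/negbTE -> _] /andP[/negbTE -> _]. Qed.

Lemma filter_odd_even_parity W :
  {in filter odd W & filter (predC odd) W, forall x y, odd x != odd y}.
Proof. by move=> x y; rewrite !mem_filter => /andP[-> _] /andP[]. Qed.

Lemma nedges_succ_same_parity C :
  {in C &, forall x y, odd x = odd y} -> nedges succ_rel C = 0.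
Proof.
move=> sameC; rewrite /nedges /ncross big1_seq // => x /andP[_ xC].
by rewrite big1_seq // => y /andP[_ yC]; rewrite succ_rel_parity // (sameC x y).
Qed.

Lemma ncross_pow2_diff_parity C D : {in C & D, forall x y, odd x != odd y} ->
  ncross pow2_rel C D = ncross succ_rel C D.
Proof.
move=> CD; apply: eq_big_seq => x xC; apply: eq_big_seq => y yD.
by rewrite pow2_rel_parity // CD.
Qed.

Lemma nedges_succ_parity_split W :
  nedges succ_rel W = ncross succ_rel (filter odd W) (filter (predC odd) W)
                      + ncross succ_rel (filter (predC odd) W) (filter odd W).
Proof.
rewrite (nedges_filterC _ odd) !nedges_succ_same_parity //.
  exact: filter_even_same_parity.
exact: filter_odd_same_parity.
Qed.

Lemma nedges_pow2_parity_split W :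
  nedges pow2_rel W = nedges pow2_rel (map half (filter odd W))
                      + nedges pow2_rel (map half (filter (predC odd) W))
                      + nedges succ_rel W.
Proof.
rewrite (nedges_filterC _ odd) nedges_succ_parity_split.
rewrite !ncross_pow2_diff_parity; first last.
- exact: filter_odd_even_parity.
- by move=> x y xA yB; rewrite eq_sym (filter_odd_even_parity yB xA).
rewrite -!(nedges_map (r := pow2_rel)) // => x y xC yC; apply: pow2_rel_half.
  exact: (filter_even_same_parity xC yC).
exact: (filter_odd_same_parity xC yC).
Qed.

Lemma sum_succ_rel_l x B : uniq B -> \sum_(y <- B) succ_rel x y = (x.+1 \in B).
Proof. by move=> uB; rewrite -count_uniq_mem // -sum1_count [RHS]big_mkcond. Qed.

Lemma ncross_succ_le_l A B : uniq B -> ncross succ_rel A B <= size A.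
Proof.
move=> uB; rewrite /ncross -sum1_size; apply: leq_sum => x _.
by rewrite sum_succ_rel_l ?leq_b1.
Qed.

Lemma ncross_succ_le_r A B : uniq A -> ncross succ_rel A B <= size B.
Proof.
move=> uA; rewrite /ncross exchange_big -sum1_size; apply: leq_sum => y _.
apply: leq_trans (leq_b1 (y.-1 \in A)).
rewrite -count_uniq_mem // -sum1_count [X in _ <= X]big_mkcond leq_sum // => x _.
by rewrite /succ_rel; case: eqP => //= ->; rewrite eqxx.
Qed.

Lemma bigmax_mem_seq (s : seq nat) : s != [::] -> \max_(x <- s) x \in s.
Proof.
elim: s => // a s IH _; rewrite big_cons /= inE.
case: (eqVneq s [::]) => [->|/IH]; first by rewrite big_nil maxn0 eqxx.
set M := \max_(j <- s) j => Ms.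
by case: (leqP a M); rewrite ?Ms ?eqxx ?orbT.
Qed.

Lemma nedges_succ_le W : uniq W -> nedges succ_rel W <= (size W).-1.
Proof.
move=> uW; case: (eqVneq W [::]) => [->|/bigmax_mem_seq maxW].
  by rewrite /nedges /ncross big_nil.
set m := \max_(x <- W) x in maxW.
have succ_m : m.+1 \notin W.
  by apply/negP => /(@leq_bigmax_seq _ W xpredT (fun x => x)) /(_ isT); rewrite ltnn.
rewrite /nedges /ncross (bigD1_seq m) //= sum_succ_rel_l // (negbTE succ_m) add0n.
apply: (@leq_trans (\sum_(i <- W | i != m) 1)).
  by apply: leq_sum => i _; rewrite sum_succ_rel_l ?leq_b1.
by rewrite sum1_count -(count_predC (pred1 m)) count_uniq_mem // maxW.
Qed.

Definition cross_bound a b := minn (a + b).-1 (minn a b).*2.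

Lemma nedges_succ_le_cross_bound W : uniq W ->
  nedges succ_rel W <= cross_bound (size (filter odd W)) (size (filter (predC odd) W)).
Proof.
move=> uW; set B := filter odd W; set A := filter (predC odd) W.
have sizeW : size W = size B + size A by rewrite !size_filter count_predC.
rewrite leq_min -sizeW nedges_succ_le //= nedges_succ_parity_split -/B -/A -addnn.
by apply: leq_add; rewrite leq_min ncross_succ_le_l ?ncross_succ_le_r ?filter_uniq.
Qed.

Lemma e_iota n : e n = nedges pow2_rel (iota 0 n).
Proof.
have iotaE : iota 0 n = index_iota 0 n by rewrite /index_iota subn0.
rewrite /nedges /ncross iotaE big_mkord; under eq_bigr do rewrite big_mkord.
rewrite pair_big /= /e cardsE -sum1_card big_mkcond /=; apply: eq_bigr => -[i j] _.
by rewrite unfold_in /pow2_rel; case: (_ && _).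
Qed.

Lemma map_half_filter_odd_iota n : map half (filter odd (iota 0 n)) = iota 0 n./2.
Proof.
elim: n => // n IH; rewrite -addn1 iotaD filter_cat map_cat IH /= add0n addn1.
rewrite [_.+1./2]/= uphalf_half addnC iotaD.
by case: (odd n); rewrite /= ?cats0 ?add0n.
Qed.

Lemma map_half_filter_even_iota n :
  map half (filter (predC odd) (iota 0 n)) = iota 0 (uphalf n).
Proof.
elim: n => // n IH; rewrite -addn1 iotaD filter_cat map_cat IH /= add0n addn1.
rewrite [uphalf n.+1]/= -addn1 iotaD add0n uphalf_half [odd n + _]addnC iotaD.
by case: (odd n); rewrite /= ?cats0 ?add0n.
Qed.

Lemma nedges_succ_iota n : nedges succ_rel (iota 0 n) = n.-1.
Proof.
case: n => [|n]; first by rewrite /nedges /ncross big_nil.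
rewrite /nedges /ncross (eq_big_seq (fun x => (x < n) : nat)) => [|x _]; last first.
  by rewrite sum_succ_rel_l ?iota_uniq // mem_iota.
rewrite -addn1 iotaD big_cat big_seq1 /= ltnn addn0 (eq_big_seq (fun=> 1)).
  by rewrite sum1_size size_iota addn1.
by move=> x; rewrite mem_iota => /andP[_ ->].
Qed.

Lemma e_half_rec n : e n = e n./2 + e (uphalf n) + n.-1.
Proof.
rewrite !e_iota nedges_pow2_parity_split nedges_succ_iota.
by rewrite map_half_filter_odd_iota map_half_filter_even_iota.
Qed.

Lemma e_add_split a b :
  e (a + b) = e (a./2 + uphalf b) + e (uphalf a + b./2) + (a + b).-1.
Proof.
rewrite [LHS]e_half_rec.
have [[-> ->]|[-> ->]] :
  ((a + b)./2 = a./2 + uphalf b /\ uphalf (a + b) = uphalf a + b./2) \/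
  ((a + b)./2 = uphalf a + b./2 /\ uphalf (a + b) = a./2 + uphalf b) by lia.
  by [].
by rewrite [X in X + _ = _]addnC.
Qed.

Lemma e0 : e 0 = 0.
Proof. by rewrite e_iota /nedges /ncross big_nil. Qed.

Lemma cross_bound_half a b : 0 < a -> 0 < b ->
  cross_bound a b + a.-1 + b.-1 <=
  cross_bound a./2 (uphalf b) + cross_bound (uphalf a) b./2 + (a + b).-1.
Proof. rewrite /cross_bound; lia. Qed.

Lemma e_add_ge a b : e a + e b + cross_bound a b <= e (a + b).
Proof.
have [n] := ubnP (a + b); elim: n a b => // n IH a b ab_lt.
case: (posnP a) => [->|a_gt0]; first by rewrite e0 !add0n /cross_bound; lia.
case: (posnP b) => [->|b_gt0]; first by rewrite e0 !addn0 /cross_bound; lia.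
have IH1 := IH (a./2) (uphalf b) ltac:(lia).
have IH2 := IH (uphalf a) (b./2) ltac:(lia).
rewrite e_add_split [e a]e_half_rec [e b]e_half_rec.
have := cross_bound_half a_gt0 b_gt0; lia.
Qed.

Lemma half_inj_same_parity (C : seq nat) :
  {in C &, forall x y, odd x = odd y} -> {in C &, injective half}.
Proof.
move=> sameC x y xC yC xy; rewrite -(odd_double_half x) -(odd_double_half y).
by rewrite xy (sameC x y).
Qed.

Lemma nedges_pow2_le_e W : uniq W -> nedges pow2_rel W <= e (size W).
Proof.
move=> uW; have := @leq_bigmax_seq _ W xpredT (fun x => x).
move: (\max_(x <- W) x) => m /(_ _ _ isT); elim: m W uW => [|m IH] W uW Wm.
  rewrite /nedges /ncross big1_seq // => x /andP[_ /Wm]; rewrite leqn0 => /eqP->.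
  by rewrite big1_seq // => y /andP[_ /Wm]; rewrite leqn0 => /eqP->.
have half_le C : {subset C <= W} -> {in C &, forall x y, odd x = odd y} -> uniq C ->
    nedges pow2_rel (map half C) <= e (size C).
  move=> CW sameC uC; rewrite -(size_map half C); apply: IH.
    by rewrite map_inj_in_uniq //; apply: half_inj_same_parity.
  by move=> _ /mapP[x /CW/Wm xm ->]; lia.
have sizeW : size W = size (filter odd W) + size (filter (predC odd) W).
  by rewrite !size_filter count_predC.
rewrite nedges_pow2_parity_split sizeW.
apply: leq_trans (e_add_ge _ _).
apply: leq_add; last exact: nedges_succ_le_cross_bound.
apply: leq_add; apply: half_le; rewrite ?filter_uniq //.
- exact/mem_subseq/filter_subseq.
- exact: filter_odd_same_parity.
- exact/mem_subseq/filter_subseq.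
- exact: filter_even_same_parity.
Qed.

Local Open Scope ring_scope.

Lemma is_pow2_natr_expz (R : numFieldType) (d : nat) (i : int) :
  d%:R = 2 ^ i :> R -> is_pow2 d.
Proof.
have two_neq0 : 2 != 0 :> R by rewrite pnatr_eq0.
case: i => j dj.
  by apply/is_pow2P; exists j; apply/eqP; rewrite -(eqr_nat R) natrX dj exprnP.
have : (d * 2 ^ j.+1)%:R == 1 :> R.
  by rewrite natrM natrX [d%:R]dj mulVf // expf_neq0.
by rewrite pnatr_eq1 muln_eq1 expnS muln_eq1 /= andbF.
Qed.

Lemma dyadic_scaleE v k K : denq v = (2 ^ k)%N%:Z -> (k <= K)%N ->
  v * 2 ^+ K = (numq v * (2 ^ (K - k))%N%:Z)%:~R.
Proof.
move=> vk kK; rewrite -(subnKC kK) exprD addKn mulrA intrM -!natrX.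
by congr (_ * _); rewrite numqE vk.
Qed.

Lemma dyadic_scale (V : seq rat) : (forall v, v \in V -> dyadic v) ->
  exists K : nat, {in V, forall v, (numq (v * 2 ^+ K))%:~R = v * 2 ^+ K}.
Proof.
move=> dV; exists (\max_(v <- V) logn 2 `|denq v|) => v vV.
have [k vk] := dV v vV.
have kK : (k <= \max_(v <- V) logn 2 `|denq v|)%N.
  have := @leq_bigmax_seq _ V xpredT (fun v => logn 2 `|denq v|) v vV isT.
  by rewrite vk pfactorK.
by rewrite (dyadic_scaleE vk kK) numq_int.
Qed.

Lemma dyadic_nat_embedding (V : seq rat) : (forall v, v \in V -> dyadic v) ->
  exists (K : nat) (c : rat) (phi : rat -> nat),
    {in V, forall v, (phi v)%:R = v * 2 ^+ K + c}.
Proof.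
move=> dV; have [K VK] := dyadic_scale dV.
pose z v := numq (v * 2 ^+ K); pose N := (\max_(v <- V) `|z v|)%N.
exists K, N%:R, (fun v => absz (z v + N%:Z)) => v vV.
have zN : (`|z v| <= N)%N := @leq_bigmax_seq _ V xpredT (fun v => `|z v|%N) v vV isT.
rewrite -[_%:R]/(((absz (z v + N%:Z))%:Z)%:~R) abszE ger0_norm; last by lia.
by rewrite intrD VK.
Qed.

Section AffineEmbedding.

Variables (V : seq rat) (K : nat) (c : rat) (phi : rat -> nat).
Hypothesis phiE : {in V, forall v, (phi v)%:R = v * 2 ^+ K + c}.

Lemma affine_embedding_inj : {in V &, injective phi}.
Proof.
move=> x y xV yV /(congr1 (fun n : nat => n%:R : rat)).
by rewrite /= !phiE // => /addIr /mulIf; apply; rewrite expf_neq0 // pnatr_eq0.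
Qed.

Lemma affine_embedding_pow2_rel x y : x \in V -> y \in V -> x < y -> adj x y ->
  pow2_rel (phi x) (phi y).
Proof.
move=> xV yV xy [_ [i xyi]].
have phiB : (phi y)%:R - (phi x)%:R = (y - x) * 2 ^+ K :> rat.
  by rewrite !phiE // opprD addrACA subrr addr0 mulrBl.
have phi_lt : (phi x < phi y)%N.
  by rewrite -(ltr_nat rat) -subr_gt0 phiB mulr_gt0 ?subr_gt0 ?exprn_gt0.
apply/andP; split=> //; apply: (@is_pow2_natr_expz rat _ (i + K%:Z)).
rewrite (natrB _ (ltnW phi_lt)) phiB expfzDr ?pnatr_eq0 // -exprnP.
by rewrite -xyi distrC gtr0_norm // subr_gt0.
Qed.

End AffineEmbedding.

Theorem mainTheorem7 (V : seq rat) (E : seq (rat * rat)) :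
  uniq V -> (1 <= size V)%N -> (forall v, v \in V -> dyadic v) ->
  uniq E ->
  (forall p, p \in E -> [/\ p.1 \in V, p.2 \in V, p.1 < p.2 & adj p.1 p.2]) ->
  (size E <= e (size V))%N.
Proof.
move=> uV _ dV uE EV.
have [K [c [phi phiE]]] := dyadic_nat_embedding dV.
have phi_inj := affine_embedding_inj phiE.
pose phi2 (p : rat * rat) := (phi p.1, phi p.2).
have phi2_inj : {in E &, injective phi2}.
  move=> [x1 x2] [y1 y2] /EV[/= x1V x2V _ _] /EV[/= y1V y2V _ _] [e1 e2].
  by rewrite (phi_inj _ _ x1V y1V e1) (phi_inj _ _ x2V y2V e2).
rewrite -(size_map phi2) -(size_map phi V).
apply: leq_trans (nedges_pow2_le_e _); last by rewrite map_inj_in_uniq.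
apply: size_pairs_le_nedges; first by rewrite map_inj_in_uniq.
move=> _ /mapP[[x y] /EV[/= xV yV xy adjxy] ->] /=.
by rewrite !map_f // (affine_embedding_pow2_rel phiE).
Qed.
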